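(* Let $\mathsf{K}$ be the variety of type $\langle\wedge,\vee,\neg,J_2,0,1\rangle$ axiomatised by: - $x\vee x\approx x$; - $x\vee y\approx y\vee x$; - $x\vee(y\vee z)\approx(x\vee y)\vee z$; - $\neg\neg x\approx x$; - $x\wedge y\approx\neg(\neg x\vee\neg y)$; - $x\wedge(\neg x\vee y)\approx x\wedge y$; - $0\vee x\approx x$; - $1\approx\neg0$; - $J_2x\vee\neg J_2x\approx1$; - $x\vee J_2y\approx x\vee J_2(x\vee y)$; - $x\wedge J_2x\approx x$; - $J_2(x\wedge\neg x)\approx0$. Then $\mathsf{K}$ satisfies: (1) $x\vee J_2x\approx x$; (2) $x\approx J_2x\vee(x\wedge\neg x)$; (3) $J_2J_2x\approx J_2x$; (4) $x\vee\neg J_2y\approx x\vee\neg J_2(x\vee y)$. *)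

Record KAlg : Type := {
  carrier :> Type;
  meet : carrier -> carrier -> carrier;
  join : carrier -> carrier -> carrier;
  neg : carrier -> carrier;
  J2 : carrier -> carrier;
  zero : carrier;
  one : carrier;
  ax_join_idem : forall x, join x x = x;
  ax_join_comm : forall x y, join x y = join y x;
  ax_join_assoc : forall x y z, join x (join y z) = join (join x y) z;
  ax_neg_invol : forall x, neg (neg x) = x;
  ax_meet_def : forall x y, meet x y = neg (join (neg x) (neg y));
  ax_meet_negjoin : forall x y, meet x (join (neg x) y) = meet x y;
  ax_zero_join : forall x, join zero x = x;
  ax_one_def : one = neg zero;
  ax_J2_compl : forall x, join (J2 x) (neg (J2 x)) = one;
  ax_J2_join : forall x y, join x (J2 y) = join x (J2 (join x y));
  ax_meet_J2 : forall x, meet x (J2 x) = x;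
  ax_J2_zero : forall x, J2 (meet x (neg x)) = zero
}.

(* The twelve identities make (A, ⊔, ¬, 0) an involutive join-semilattice in
   which ⊓ is the De Morgan dual of ⊔ and obeys the absorption law
   x ⊓ (¬x ⊔ y) = x ⊓ y together with its dual x ⊔ (¬x ⊓ y) = x ⊔ y.  Since
   J2 (x ⊓ ¬x) = 0, the J2-join axiom with y := x ⊓ ¬x gives (1).  Each J2 x is
   complemented, so ¬J2 x ⊓ x = ¬J2 x ⊓ J2 x ⊓ x = x ⊓ 0 = x ⊓ ¬x, and the dual
   absorption law turns x = J2 x ⊔ x into (2).  Applying (2) to the complemented
   element J2 x gives (3), and (4) is the J2-join axiom seen through the dual
   absorption law x ⊔ ¬b = x ⊔ ¬(x ⊔ b). *)


Section KAlgebraLaws.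

Variable A : KAlg.

Local Notation "x ⊔ y" := (join A x y) (at level 50, left associativity).
Local Notation "x ⊓ y" := (meet A x y) (at level 40, left associativity).
Local Notation "¬ x" := (neg A x) (at level 35, right associativity).
Local Notation J := (J2 A).
Local Notation "0" := (zero A).
Local Notation "1" := (one A).

Lemma neg_join (x y : A) : ¬(x ⊔ y) = ¬x ⊓ ¬y.
Proof. now rewrite ax_meet_def, !ax_neg_invol. Qed.

Lemma neg_meet (x y : A) : ¬(x ⊓ y) = ¬x ⊔ ¬y.
Proof. now rewrite ax_meet_def, ax_neg_invol. Qed.

Lemma meet_comm (x y : A) : x ⊓ y = y ⊓ x.
Proof. now rewrite !ax_meet_def, ax_join_comm. Qed.

Lemma meet_assoc (x y z : A) : x ⊓ (y ⊓ z) = x ⊓ y ⊓ z.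
Proof. now rewrite !ax_meet_def, !ax_neg_invol, ax_join_assoc. Qed.

Lemma join_zero_r (x : A) : x ⊔ 0 = x.
Proof. now rewrite ax_join_comm, ax_zero_join. Qed.

Lemma neg_one : ¬1 = 0.
Proof. now rewrite ax_one_def, ax_neg_invol. Qed.

Lemma join_neg_meet (x y : A) : x ⊔ (¬x ⊓ y) = x ⊔ y.
Proof.
  assert (H := ax_meet_negjoin A (¬x) (¬y)).
  rewrite ax_neg_invol in H.
  apply (f_equal (neg A)) in H.
  now rewrite !neg_meet, !ax_neg_invol, neg_join, ax_neg_invol in H.
Qed.

Lemma meet_neg_self (x : A) : x ⊓ ¬x = x ⊓ 0.
Proof. now rewrite <- (join_zero_r (¬x)), ax_meet_negjoin. Qed.

Lemma join_meet_neg_self (x : A) : x ⊔ (x ⊓ ¬x) = x.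
Proof. now rewrite meet_comm, join_neg_meet, ax_join_idem. Qed.

Lemma join_neg_join (x y : A) : x ⊔ ¬y = x ⊔ ¬(x ⊔ y).
Proof. now rewrite neg_join, join_neg_meet. Qed.

Lemma J2_meet_neg_J2 (x : A) : J x ⊓ ¬J x = 0.
Proof. now rewrite ax_meet_def, ax_neg_invol, ax_join_comm, ax_J2_compl, neg_one. Qed.

Lemma join_J2_self (x : A) : x ⊔ J x = x.
Proof.
  assert (H := ax_J2_join A x (x ⊓ ¬x)).
  now rewrite join_meet_neg_self, ax_J2_zero, join_zero_r in H.
Qed.

Lemma neg_J2_meet_self (x : A) : ¬J x ⊓ x = x ⊓ ¬x.
Proof.
  rewrite meet_neg_self, <- (J2_meet_neg_J2 x), meet_assoc, ax_meet_J2.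
  apply meet_comm.
Qed.

Lemma J2_join_meet_neg_self (x : A) : x = J x ⊔ (x ⊓ ¬x).
Proof.
  rewrite <- neg_J2_meet_self, join_neg_meet, ax_join_comm.
  now rewrite join_J2_self.
Qed.

Lemma J2_idem (x : A) : J (J x) = J x.
Proof.
  assert (H := J2_join_meet_neg_self (J x)).
  now rewrite J2_meet_neg_J2, join_zero_r in H.
Qed.

Lemma join_neg_J2 (x y : A) : x ⊔ ¬J y = x ⊔ ¬J (x ⊔ y).
Proof. now rewrite join_neg_join, ax_J2_join, <- join_neg_join. Qed.

End KAlgebraLaws.

Theorem lemma4p2 (A : KAlg) :
  (forall x : A, join A x (J2 A x) = x) /\
  (forall x : A, x = join A (J2 A x) (meet A x (neg A x))) /\
  (forall x : A, J2 A (J2 A x) = J2 A x) /\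
  (forall x y : A, join A x (neg A (J2 A y)) = join A x (neg A (J2 A (join A x y)))).
Proof.
  repeat split.
  - apply join_J2_self.
  - apply J2_join_meet_neg_self.
  - apply J2_idem.
  - apply join_neg_J2.
Qed.
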